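(* Let $\mathcal H$ be a Hilbert space and $U$ a unitary on $\mathcal H$. Let $\phi:B(\mathcal H)\to B(\mathcal H)$ be a completely positive map and let $\psi:B(\mathcal H)\to B(\mathcal H)$, $\psi(X):=U\phi(U^*X)$, have the form $$\psi(X)=\sum_{i=1}^l R_i^{\#}XR_i\quad(X\in B(\mathcal H)),\qquad R_i^{\#}=UR_i^*U^*,$$ for some $R_1,\dots,R_l\in B(\mathcal H)$. Let $p\in\mathbb N$. Then the following are equivalent: (1) $\psi^p(X)=0$ for all $X\in B(\mathcal H)$, where $\psi^p$ is the $p$-fold composition of $\psi$; (2) $R_{i_1}R_{i_2}\cdots R_{i_p}=0$ for all $i_1,\dots,i_p\in\{1,\dots,l\}$. *)

(* a Hilbert space over C = R[i] (R : realType), described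
   by an inner product on an lmodType, with completeness; bounded operators
   are (bounded, linear) functions V -> V. *)
From HB Require Import structures.
From mathcomp Require Import all_boot all_order all_algebra.
From mathcomp Require Import complex.
From mathcomp Require Import reals.
Set Implicit Arguments. Unset Strict Implicit. Unset Printing Implicit Defensive.
Import Order.TTheory GRing.Theory Num.Theory.
Local Open Scope ring_scope.

Section Hilbert.
Variables (R : realType) (V : lmodType R[i]) (ip : V -> V -> R[i]).

Definition is_inner_product : Prop :=
  [/\ (forall (a : R[i]) (x y z : V), ip (a *: x + y) z = a * ip x z + ip y z),
      (forall x y : V, ip y x = (ip x y)^*),
      (forall x : V, 0 <= ip x x) &
      (forall x : V, ip x x = 0 -> x = 0)].

Definition normH (x : V) : R := Num.sqrt (complex.Re (ip x x)).

Definition cauchy_seq (u : nat -> V) : Prop :=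
  forall e : R, 0 < e -> exists N : nat,
    forall m n, (N <= m)%N -> (N <= n)%N -> normH (u m - u n) < e.

Definition converges_to (u : nat -> V) (l : V) : Prop :=
  forall e : R, 0 < e -> exists N : nat, forall n, (N <= n)%N -> normH (u n - l) < e.

Definition is_hilbert : Prop :=
  is_inner_product /\
  (forall u : nat -> V, cauchy_seq u -> exists l, converges_to u l).

Definition bounded_op (T : V -> V) : Prop :=
  (forall (a : R[i]) (x y : V), T (a *: x + y) = a *: T x + T y) /\
  (exists M : R, forall x, normH (T x) <= M * normH x).

Definition is_adjoint (T S : V -> V) : Prop :=
  forall x y : V, ip (T x) y = ip x (S y).

Definition unitary (U Ustar : V -> V) : Prop :=
  [/\ bounded_op U, is_adjoint U Ustar,
      (forall x, U (Ustar x) = x) & (forall x, Ustar (U x) = x)].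

(* an n x n operator matrix T (an element of M_n(B(H)) acting on H^n) is
   positive *)
Definition op_matrix_pos (n : nat) (T : 'I_n -> 'I_n -> V -> V) : Prop :=
  forall x : 'I_n -> V, 0 <= \sum_(i < n) \sum_(j < n) ip (T i j (x j)) (x i).

Definition completely_positive (phi : (V -> V) -> (V -> V)) : Prop :=
  [/\ (forall X, bounded_op X -> bounded_op (phi X)),
      (forall (a : R[i]) X Y, bounded_op X -> bounded_op Y ->
         forall v, phi (fun w => a *: X w + Y w) v = a *: phi X v + phi Y v) &
      (forall (n : nat) (T : 'I_n -> 'I_n -> V -> V),
         (forall i j, bounded_op (T i j)) -> op_matrix_pos T ->
         op_matrix_pos (fun i j => phi (T i j)))].

End Hilbert.

Definition psi_of (V : Type) (U Ustar : V -> V) (phi : (V -> V) -> (V -> V))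
  (X : V -> V) : V -> V := U \o phi (Ustar \o X).

(* R_{i_1} R_{i_2} ... R_{i_p} for s = [:: i_1; ...; i_p] *)
Definition prod_ops (V : Type) (l : nat) (Rs : 'I_l -> V -> V) (s : seq 'I_l)
  : V -> V := foldr (fun i f => Rs i \o f) id s.

From HB Require Import structures.
From mathcomp Require Import all_boot all_order all_algebra.
From mathcomp Require Import complex.
From mathcomp Require Import reals.
Set Implicit Arguments. Unset Strict Implicit. Unset Printing Implicit Defensive.
Import Order.TTheory GRing.Theory Num.Theory.
Local Open Scope ring_scope.

(* (2) => (1): unfolding the Kraus form, psi^k(X) v is a sum of terms in
   which X is evaluated at the vectors R_s v with s a word of length k.
   (1) => (2): take X = U. The form F_k(v) = <v, U^* psi^k(U) v> satisfies
   F_0(v) = <v, v> and F_(k+1)(v) = sum_i F_k(R_i v), so F_k(v) is the sum of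
   the |R_s v|^2 over the words s of length k; hence F_p = 0 forces R_s = 0. *)

Lemma prod_ops_rcons (V : Type) (l : nat) (Rs : 'I_l -> V -> V)
    (s : seq 'I_l) i v :
  prod_ops Rs (rcons s i) v = prod_ops Rs s (Rs i v).
Proof. by elim: s => //= j s IH; rewrite /= IH. Qed.

Section InnerProduct.
Variables (R : realType) (V : lmodType R[i]) (ip : V -> V -> R[i]).
Hypothesis hip : is_inner_product ip.

Lemma ip0l w : ip 0 w = 0.
Proof.
case: hip => ipl _ _ _; have := ipl 1 0 0 w.
by rewrite scale1r addr0 mul1r -{1}[ip 0 w]addr0 => /addrI.
Qed.

Lemma ip0r w : ip w 0 = 0.
Proof. by case: hip => _ ipc _ _; rewrite ipc ip0l conjC0. Qed.

Lemma ipDr x y z : ip x (y + z) = ip x y + ip x z.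
Proof.
case: hip => ipl ipc _ _; have := ipl 1 y z x; rewrite scale1r mul1r => ipD.
by rewrite ipc ipD rmorphD [ip x y]ipc [ip x z]ipc.
Qed.

Lemma ip_sumr (I : Type) (r : seq I) (P : pred I) (F : I -> V) x :
  ip x (\sum_(i <- r | P i) F i) = \sum_(i <- r | P i) ip x (F i).
Proof. exact: (big_morph (ip x) (ipDr x) (ip0r x)). Qed.

Lemma adjoint0 (T S : V -> V) : is_adjoint ip T S -> S 0 = 0.
Proof. by case: hip => _ _ _ ipd hTS; apply: ipd; rewrite -hTS ip0r. Qed.

End InnerProduct.

Section BoundedOperators.
Variables (R : realType) (V : lmodType R[i]) (ip : V -> V -> R[i]).

Lemma bounded_opD (X : V -> V) x y :
  bounded_op ip X -> X (x + y) = X x + X y.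
Proof. by case=> lin _; have := lin 1 x y; rewrite !scale1r. Qed.

Lemma bounded_op0 (X : V -> V) : bounded_op ip X -> X 0 = 0.
Proof.
move=> hX; have := bounded_opD 0 0 hX.
by rewrite addr0 -{1}[X 0]addr0 => /addrI.
Qed.

Lemma bounded_op_sum (X : V -> V) : bounded_op ip X ->
  forall (I : Type) (r : seq I) (P : pred I) (F : I -> V),
  X (\sum_(i <- r | P i) F i) = \sum_(i <- r | P i) X (F i).
Proof.
move=> hX; exact: (big_morph X (fun x y => bounded_opD x y hX) (bounded_op0 hX)).
Qed.

Lemma bounded_op_comp (A B : V -> V) :
  bounded_op ip A -> bounded_op ip B -> bounded_op ip (A \o B).
Proof.
move=> [linA [MA hMA]] [linB [MB hMB]]; split=> [a x y /=|].
  by rewrite linB linA.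
have normH_ge0 y : 0 <= normH ip y by apply: sqrtr_ge0.
have le_maxl (M : R) : M <= Num.max M 0 by rewrite le_max lexx.
exists (Num.max MA 0 * Num.max MB 0) => x /=.
apply: le_trans (hMA _) _; rewrite -mulrA.
apply: le_trans (ler_wpM2r (normH_ge0 _) (le_maxl _)) _.
apply: ler_wpM2l; first by rewrite le_max lexx orbT.
exact: le_trans (hMB _) (ler_wpM2r (normH_ge0 _) (le_maxl _)).
Qed.

Lemma unitary_adjoint_bounded (U Ustar : V -> V) :
  unitary ip U Ustar -> bounded_op ip Ustar.
Proof.
case=> [[linU _] adjU UUs UsU]; split=> [a x y|].
  by rewrite -{1}(UUs x) -{1}(UUs y) -linU UsU.
by exists 1 => x; rewrite mul1r /normH -adjU UUs.
Qed.

Lemma psi_of_bounded (U Ustar : V -> V) (phi : (V -> V) -> V -> V) :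
    unitary ip U Ustar -> completely_positive ip phi ->
  forall X, bounded_op ip X -> bounded_op ip (psi_of U Ustar phi X).
Proof.
move=> hU [phiB _ _] X hX; have [hUb _ _ _] := hU.
apply: bounded_op_comp hUb (phiB _ _).
exact: bounded_op_comp (unitary_adjoint_bounded hU) hX.
Qed.

End BoundedOperators.

Section KrausNilpotency.
Variables (R : realType) (V : lmodType R[i]) (ip : V -> V -> R[i]).
Hypothesis hip : is_inner_product ip.
Variables (U Ustar : V -> V) (l : nat) (Rs Rss : 'I_l -> V -> V).
Hypothesis hU : unitary ip U Ustar.
Hypothesis hRs : forall i, is_adjoint ip (Rs i) (Rss i).
Variable psi : (V -> V) -> V -> V.
Hypothesis psi_bounded : forall X, bounded_op ip X -> bounded_op ip (psi X).
Hypothesis psi_kraus : forall X, bounded_op ip X -> forall v,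
  psi X v = \sum_(i < l) U (Rss i (Ustar (X (Rs i v)))).

Lemma iter_psi_bounded k X : bounded_op ip X -> bounded_op ip (iter k psi X).
Proof. by move=> hX; elim: k => //= k; apply: psi_bounded. Qed.

Lemma iter_psi_eq0 k X : bounded_op ip X ->
    (forall s : seq 'I_l, size s = k -> forall w, X (prod_ops Rs s w) = 0) ->
  forall v, iter k psi X v = 0.
Proof.
have [hUb _ _ _] := hU; have hUsb := unitary_adjoint_bounded hU.
elim: k X => [|k IH] X hX Xs0 v; first exact: (Xs0 [::]).
rewrite iterSr; apply: IH (psi_bounded hX) _ _ => s size_s w.
rewrite psi_kraus //; apply: big1 => i _.
rewrite [X _](Xs0 (i :: s)) /= ?size_s // (bounded_op0 hUsb).
by rewrite (adjoint0 hip (hRs i)) (bounded_op0 hUb).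
Qed.

Definition psiU_form k v := ip v (Ustar (iter k psi U v)).

Lemma psiU_formS k v : psiU_form k.+1 v = \sum_(i < l) psiU_form k (Rs i v).
Proof.
have [hUb _ _ UsU] := hU.
rewrite /psiU_form iterS psi_kraus; last exact: iter_psi_bounded.
rewrite (bounded_op_sum (unitary_adjoint_bounded hU)) ip_sumr //.
by apply: eq_bigr => i _; rewrite UsU -hRs.
Qed.

Lemma psiU_form_ge0 k v : 0 <= psiU_form k v.
Proof.
have [_ _ ip_ge0 _] := hip; have [_ _ _ UsU] := hU.
elim: k v => [|k IH] v; first by rewrite /psiU_form /= UsU.
by rewrite psiU_formS; apply: sumr_ge0.
Qed.

Lemma psiU_form_eq0 k v : psiU_form k v = 0 ->
  forall s : seq 'I_l, size s = k -> prod_ops Rs s v = 0.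
Proof.
have [_ _ _ ipd] := hip; have [_ _ _ UsU] := hU.
elim: k v => [|k IH] v Fv0 s.
  by case: s => // _; apply: ipd; rewrite -Fv0 /psiU_form /= UsU.
case/lastP: s => [//|s i]; rewrite size_rcons => -[size_s].
rewrite prod_ops_rcons; apply: IH size_s; move: Fv0; rewrite psiU_formS.
by move/psumr_eq0P => -> // j _; apply: psiU_form_ge0.
Qed.

End KrausNilpotency.

Theorem proposition4p2 (R : realType) (V : lmodType R[i]) (ip : V -> V -> R[i])
  (hH : is_hilbert ip)
  (U Ustar : V -> V) (hU : unitary ip U Ustar)
  (phi : (V -> V) -> (V -> V)) (hphi : completely_positive ip phi)
  (l : nat) (Rs Rss : 'I_l -> V -> V)
  (hR : forall i, bounded_op ip (Rs i))
  (hRs : forall i, is_adjoint ip (Rs i) (Rss i))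
  (hpsi : forall X, bounded_op ip X -> forall v,
     psi_of U Ustar phi X v = \sum_(i < l) U (Rss i (Ustar (X (Rs i v)))))
  (p : nat) :
  (forall X, bounded_op ip X -> forall v, iter p (psi_of U Ustar phi) X v = 0)
  <-> (forall (s : p.-tuple 'I_l) (v : V), prod_ops Rs s v = 0).
Proof.
have [hip _] := hH; have [hUb _ _ _] := hU.
have psiB := psi_of_bounded hU hphi.
split=> [psi_p0 s v | Rs0 X hX].
  apply: (psiU_form_eq0 hip hU hRs psiB hpsi _ (size_tuple s)).
  rewrite /psiU_form psi_p0 // (bounded_op0 (unitary_adjoint_bounded hU)).
  exact: ip0r.
apply: (iter_psi_eq0 hip hU hRs psiB hpsi hX) => s size_s w.
have size_s' : size s == p by rewrite size_s.
by rewrite (Rs0 (Tuple size_s')) (bounded_op0 hX).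
Qed.
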